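(* Let $\mathbb{K}$ be an infinite field and let $\mathfrak{I}=\langle f_1,\ldots,f_s\rangle\subset\mathbb{K}[x_1,\ldots,x_n]$ be an ideal generated by (possibly non-homogeneous) polynomials. If $(f_1,\ldots,f_s)$ is a regular sequence, then there exists a Zariski open set $U_a\subset\mathrm{GL}(\mathbb{K},n)$ such that for all $g\in U_a$, $E(g\cdot\mathfrak{I})=E(\mathrm{Gin}(\mathfrak{I}^h))$.
   Context: For a polynomial $f$, $f^h$ denotes its homogeneous component of highest degree, and $\mathfrak{I}^h=\langle f_1^h,\ldots,f_s^h\rangle$. The sequence $(f_1,\ldots,f_s)$ is regular if $(f_1^h,\ldots,f_s^h)$ is regular: each $f_{i+1}^h$ is not a zero divisor in $\mathbb{K}[x_1,\ldots,x_n]/\langle f_1^h,\ldots,f_i^h\rangle$. For $g\in\mathrm{GL}(\mathbb{K},n)$, $g\cdot\mathfrak{I}=\{f(g\cdot X): f\in\mathfrak{I}\}$ with $X=[x_1,\ldots,x_n]^t$. DRL is the degree reverse lexicographical ordering with $x_1>\cdots>x_n$; $\mathrm{in}_{drl}(\mathfrak{J})$ is the ideal of DRL leading terms of elements of $\mathfrak{J}$ and $E(\mathfrak{J})$ its minimal set of monomial generators. For a homogeneous ideal $\mathfrak{J}$ over an infinite field there exist a nonempty Zariski open $U\subset\mathrm{GL}(\mathbb{K},n)$ and a monomial ideal $\mathrm{Gin}(\mathfrak{J})$ (the generic initial ideal) with $\mathrm{in}_{drl}(g\cdot\mathfrak{J})=\mathrm{Gin}(\mathfrak{J})$ for all $g\in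 U$. *)

From HB Require Import structures.
From mathcomp Require Import all_boot all_order all_algebra.
From mathcomp Require Import mpoly.
Set Implicit Arguments. Unset Strict Implicit. Unset Printing Implicit Defensive.
Import Order.TTheory GRing.Theory.
Local Open Scope ring_scope.

Section Defs.
Variables (K : fieldType) (n : nat).

Definition gen_ideal (S : seq {mpoly K[n]}) (p : {mpoly K[n]}) : Prop :=
  exists c : 'I_(size S) -> {mpoly K[n]}, p = \sum_(i < size S) c i * S`_i.

(* f^h : homogeneous component of highest degree (0 for f = 0). *)
Definition hcomp (f : {mpoly K[n]}) : {mpoly K[n]} :=
  pihomog mdeg (msize f).-1 f.

Definition regular_seq (fs : seq {mpoly K[n]}) : Prop :=
  forall i : nat, (i < size fs)%N ->
    forall q : {mpoly K[n]},
      gen_ideal (map hcomp (take i fs)) (q * hcomp (nth 0 fs i)) ->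
      gen_ideal (map hcomp (take i fs)) q.

(* g . f = f(g X), X = [x_1..x_n]^t, i.e. x_i |-> sum_j g_ij x_j. *)
Definition act (g : 'M[K]_n) (f : {mpoly K[n]}) : {mpoly K[n]} :=
  f \mPo [tuple \sum_(j < n) g i j *: 'X_j | i < n].

Definition act_set (g : 'M[K]_n) (J : {mpoly K[n]} -> Prop) : {mpoly K[n]} -> Prop :=
  fun p => exists q, J q /\ p = act g q.

(* DRL (strict) order with x_1 > ... > x_n (x_1 is index 0):
   x^a <_drl x^b iff deg a < deg b, or deg a = deg b and the rightmost
   nonzero entry of a - b is positive. *)
Definition drl_lt (a b : 'X_{1..n}) : Prop :=
  (mdeg a < mdeg b)%N \/
  (mdeg a = mdeg b /\
   exists i : 'I_n, (b i < a i)%N /\ forall j : 'I_n, (i < j)%N -> a j = b j).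

Definition is_lead_drl (f : {mpoly K[n]}) (m : 'X_{1..n}) : Prop :=
  m \in msupp f /\ forall m', m' \in msupp f -> m' <> m -> drl_lt m' m.

(* in_drl(J), a monomial ideal represented by its set of monomials. *)
Definition in_drl (J : {mpoly K[n]} -> Prop) (m : 'X_{1..n}) : Prop :=
  exists f, J f /\ f != 0 /\ is_lead_drl f m.

Definition mdivides (a b : 'X_{1..n}) : Prop := forall i : 'I_n, (a i <= b i)%N.

Definition min_gens (M : 'X_{1..n} -> Prop) (m : 'X_{1..n}) : Prop :=
  M m /\ forall m', M m' -> mdivides m' m -> m' = m.

Definition E_drl (J : {mpoly K[n]} -> Prop) : 'X_{1..n} -> Prop :=
  min_gens (in_drl J).

(* Zariski open subsets of GL(K,n) (viewed inside affine n^2-space via the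
   entries): U = GL(K,n) minus the common zero locus of finitely many
   polynomials in the n*n entries. *)
Definition zariski_open_GL (U : 'M[K]_n -> Prop) : Prop :=
  exists ps : seq {mpoly K[n * n]},
    forall g : 'M[K]_n,
      U g <-> (g \in unitmx /\ exists2 P, P \in ps & P.@[fun k => mxvec g 0 k] != 0).

Definition is_Gin (J : {mpoly K[n]} -> Prop) (G : 'X_{1..n} -> Prop) : Prop :=
  exists U, zariski_open_GL U /\ (exists g, U g) /\
    forall g, U g -> forall m, in_drl (act_set g J) m <-> G m.

End Defs.

From HB Require Import structures.
From mathcomp Require Import all_boot all_order all_algebra.
From mathcomp Require Import mpoly.
Set Implicit Arguments. Unset Strict Implicit. Unset Printing Implicit Defensive.
Import GRing.Theory.
Local Open Scope ring_scope.

(* Idea: since (f_1^h, ..., f_s^h) is regular, the leading form of every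
   element of <f_1, ..., f_s> lies in <f_1^h, ..., f_s^h> (a syzygy cancelling
   leading forms is lifted one degree lower, by induction on the generators),
   and conversely the leading form of every element of the latter is the
   leading form of an element of the former.  A linear change of coordinates commutes with taking leading
   forms, and DRL compares total degrees first, so f and f^h have the same
   leading monomial.  Hence in_drl (g . I) = in_drl (g . I^h) = Gin (I^h) on
   the open set defining Gin (I^h), and the minimal generators agree.  The
   infinitude of K is only needed for the existence of Gin, which is assumed. *)

Section HomogeneousComponents.
Variables (R : nzRingType) (n : nat).
Implicit Types (p q b : {mpoly R[n]}) (m : 'X_{1..n}).

Lemma mcoeff_pihomog d p m :
  (pihomog mdeg d p)@_m = if mdeg m == d then p@_m else 0.
Proof.
have -> : pihomog mdeg d p = \sum_(m' <- msupp p) p@_m' *: pihomog mdeg d 'X_[m'].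
  by rewrite [X in pihomog _ _ X]mpolyE linear_sum; apply: eq_bigr => i _; rewrite linearZ.
rewrite [in RHS](mpolyE p) !raddf_sum /=; case: eqP => [dm|nd].
  apply: eq_bigr => m' _; rewrite pihomogX !mcoeffZ.
  case: eqP => [//|nd']; rewrite mcoeff0 mcoeffX.
  by case: eqP => [e|]; [case: nd'; rewrite e | rewrite mulr0].
rewrite big1 // => m' _; rewrite pihomogX mcoeffZ.
case: eqP => [dm'|_]; last by rewrite mcoeff0 mulr0.
by rewrite mcoeffX; case: eqP => [e|]; [case: nd; rewrite -e | rewrite mulr0].
Qed.

Lemma msupp_pihomog d p m :
  m \in msupp (pihomog mdeg d p) -> m \in msupp p /\ mdeg m = d.
Proof.
by rewrite !mcoeff_msupp mcoeff_pihomog; case: (mdeg m =P d) => [|_]; rewrite ?eqxx.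
Qed.

Lemma msize_leP p d : (msize p <= d)%N <-> (forall m, (d <= mdeg m)%N -> p@_m = 0).
Proof.
split=> [le_pd m le_dm|p_eq0]; first exact/memN_msupp_eq0/msize_mdeg_ge/(leq_trans le_pd).
rewrite msizeE; apply/bigmax_leqP_seq => m; rewrite mcoeff_msupp => nz_m _.
by rewrite ltnNge; apply: contra nz_m => /p_eq0 ->.
Qed.

Lemma pihomog_ge_msize d p : (msize p <= d)%N -> pihomog mdeg d p = 0.
Proof.
move/msize_leP => p_eq0; apply/mpolyP => m; rewrite mcoeff_pihomog mcoeff0.
by case: eqP => // dm; rewrite p_eq0 ?dm.
Qed.

Lemma msize_dhomog_le d p : p \is d.-homog -> (msize p <= d.+1)%N.
Proof.
move/dhomogP => hp; rewrite msizeE; apply/bigmax_leqP_seq => m /hp -> _.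
exact: leqnn.
Qed.

Lemma msize_dhomog d p : p \is d.-homog -> p != 0 -> msize p = d.+1.
Proof. by move/dhomogP => hp nz_p; rewrite -mlead_deg // hp // mlead_supp. Qed.

Lemma msizeB_pihomog d p q : (msize p <= d.+1)%N -> (msize q <= d.+1)%N ->
  pihomog mdeg d p = pihomog mdeg d q -> (msize (p - q) <= d)%N.
Proof.
move=> /msize_leP hp /msize_leP hq /mpolyP e; apply/msize_leP => m le_dm.
rewrite mcoeffB; case: (ltngtP d (mdeg m)) => [lt_dm|lt_md|dm].
- by rewrite hp // hq // subr0.
- by move: le_dm; rewrite leqNgt lt_md.
- by move: (e m); rewrite !mcoeff_pihomog dm eqxx => ->; rewrite subrr.
Qed.

Lemma pihomogM_dhomog d e b p : b \is d.-homog ->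
  pihomog mdeg e (b * p) = if (d <= e)%N then b * pihomog mdeg (e - d) p else 0.
Proof.
move=> hb; set k := maxn (msize p) (e - d).+1.
rewrite {1}(pihomog_partitionE (leq_maxl (msize p) (e - d).+1)).
rewrite mulr_sumr linear_sum /=.
have piM i : pihomog mdeg e (b * pihomog mdeg i p) =
    if (d + i == e)%N then b * pihomog mdeg i p else 0.
  have hbi : b * pihomog mdeg i p \is (d + i).-homog by exact/dhomogM/pihomogP.
  by case: eqP => [<-|/eqP ne]; [exact: pihomog_dE | exact: pihomog_ne0 hbi].
under eq_bigr do rewrite piM.
case: leqP => [le_de|lt_ed].
  have lt_k : (e - d < k)%N by rewrite leq_max ltnSn orbT.
  rewrite (bigD1 (Ordinal lt_k)) //= subnKC // eqxx big1 ?addr0 // => i ne.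
  case: eqP => // de; case/eqP: ne; apply: val_inj => /=.
  by rewrite -de addKn.
rewrite big1 // => i _; case: eqP => // de; exfalso.
by move: lt_ed; rewrite -de ltnNge leq_addr.
Qed.

End HomogeneousComponents.

Lemma leq_msizeM (R : idomainType) (n : nat) (p q : {mpoly R[n]}) :
  (msize (p * q) <= (msize p + msize q).-1)%N.
Proof.
have [->|nz_p] := eqVneq p 0; first by rewrite mul0r msize0.
have [->|nz_q] := eqVneq q 0; first by rewrite mulr0 msize0.
by rewrite msizeM_proper // mulf_neq0 // mleadc_eq0.
Qed.

Section LeadingForm.
Variables (K : fieldType) (n : nat).
Implicit Types (p q r : {mpoly K[n]}) (m : 'X_{1..n}).

Lemma hcomp_dhomog p : hcomp p \is (msize p).-1.-homog.
Proof. exact: pihomogP. Qed.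

Lemma hcomp0 : hcomp (0 : {mpoly K[n]}) = 0.
Proof. exact: raddf0. Qed.

Lemma hcomp_eq0 p : (hcomp p == 0) = (p == 0).
Proof.
apply/idP/idP => [|/eqP->]; last by rewrite hcomp0.
apply: contraLR => nz_p; apply/eqP => /mpolyP /(_ (mlead p)).
rewrite mcoeff_pihomog -mlead_deg // eqxx mcoeff0 => /eqP.
by rewrite mleadc_eq0 (negbTE nz_p).
Qed.

Lemma msizeB_hcomp p : (msize (p - hcomp p) <= (msize p).-1)%N.
Proof.
have [->|nz_p] := eqVneq p 0; first by rewrite hcomp0 subr0 msize0.
apply: msizeB_pihomog; first by rewrite -mpolySpred.
  exact/msize_dhomog_le/hcomp_dhomog.
by rewrite pihomog_id.
Qed.

Lemma hcomp_top d p r : r \is d.-homog -> r != 0 -> (msize (p - r) <= d)%N ->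
  hcomp p = r.
Proof.
move=> hr nz_r le_pr_d; have size_r := msize_dhomog hr nz_r.
have size_p : msize p = d.+1.
  apply/eqP; rewrite eqn_leq; apply/andP; split.
    rewrite -(subrK r p); apply: leq_trans (msizeD_le _ _) _.
    by rewrite geq_max (leq_trans le_pr_d) // msize_dhomog_le.
  have r_eq : p - (p - r) = r by rewrite opprB addrC subrK.
  have := msizeD_le p (- (p - r)); rewrite r_eq size_r msizeN leq_max.
  by case/orP=> // /leq_trans /(_ le_pr_d); rewrite ltnn.
by rewrite /hcomp size_p /= -(subrK r p) pihomogD pihomog_ge_msize // add0r pihomog_dE.
Qed.

Lemma hcompM p q : hcomp (p * q) = hcomp p * hcomp q.
Proof.
have [->|nz_p] := eqVneq p 0; first by rewrite mul0r hcomp0 mul0r.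
have [->|nz_q] := eqVneq q 0; first by rewrite mulr0 hcomp0 mulr0.
apply: (@hcomp_top ((msize p).-1 + (msize q).-1)%N).
- exact/dhomogM/hcomp_dhomog/hcomp_dhomog.
- by rewrite mulf_neq0 // hcomp_eq0.
have -> : p * q - hcomp p * hcomp q = (p - hcomp p) * q + hcomp p * (q - hcomp q).
  by rewrite mulrBl mulrBr addrA subrK.
apply: leq_trans (msizeD_le _ _) _; rewrite geq_max; apply/andP; split.
  apply: leq_trans (leq_msizeM _ _) _; rewrite (mpolySpred _ nz_q) addnS /=.
  by rewrite leq_add2r msizeB_hcomp.
apply: leq_trans (leq_msizeM _ _) _.
rewrite (msize_dhomog (hcomp_dhomog p)) ?hcomp_eq0 // addSn /=.
by rewrite leq_add2l msizeB_hcomp.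
Qed.

Lemma hcompDl p q : (msize q < msize p)%N -> hcomp (p + q) = hcomp p.
Proof.
move=> lt_qp; have nz_p : p != 0 by rewrite -msize_poly_eq0 -lt0n (leq_ltn_trans _ lt_qp).
apply: (hcomp_top (hcomp_dhomog p)); first by rewrite hcomp_eq0.
rewrite addrAC; apply: leq_trans (msizeD_le _ _) _.
by rewrite geq_max msizeB_hcomp -ltnS -mpolySpred.
Qed.

Lemma hcompD p q : msize p = msize q -> hcomp p + hcomp q != 0 ->
  hcomp (p + q) = hcomp p + hcomp q.
Proof.
move=> size_pq nz_pq; apply: (@hcomp_top (msize p).-1) => //.
  by rewrite rpredD ?hcomp_dhomog // size_pq hcomp_dhomog.
rewrite opprD addrACA; apply: leq_trans (msizeD_le _ _) _.
by rewrite geq_max msizeB_hcomp size_pq msizeB_hcomp.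
Qed.

Lemma lead_drl_mdeg p m : is_lead_drl p m -> mdeg m = (msize p).-1.
Proof.
case=> p_m lead_m; have nz_p : p != 0 by apply: contraTneq p_m => ->; rewrite msupp0.
have [<-|ne] := eqVneq (mlead p) m; first by rewrite -mlead_deg.
apply/eqP; rewrite eqn_leq -ltnS -(mpolySpred _ nz_p) msize_mdeg_lt //=.
rewrite -(mlead_deg nz_p) /=.
by case: (lead_m _ (mlead_supp nz_p) (elimN eqP ne)) => [/ltnW|[-> _]].
Qed.

Lemma lead_drl_hcomp p m : is_lead_drl (hcomp p) m <-> is_lead_drl p m.
Proof.
split=> [[/msupp_pihomog[p_m deg_m] lead_m]|lead_m].
  have nz_p : p != 0 by apply: contraTneq p_m => ->; rewrite msupp0.
  split=> // m' p_m' ne; have [deg_m'|ne_deg] := eqVneq (mdeg m') (msize p).-1.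
    by apply: lead_m ne; rewrite mcoeff_msupp mcoeff_pihomog deg_m' eqxx -mcoeff_msupp.
  left; rewrite deg_m; have := msize_mdeg_lt p_m'.
  by rewrite (mpolySpred _ nz_p) ltnS leq_eqVlt (negbTE ne_deg).
have deg_m := lead_drl_mdeg lead_m; case: lead_m => p_m lead_m; split.
  by rewrite mcoeff_msupp mcoeff_pihomog deg_m eqxx -mcoeff_msupp.
by move=> m' /msupp_pihomog[p_m' _]; exact: lead_m.
Qed.

End LeadingForm.

Section GeneratedIdeal.
Variables (K : fieldType) (n : nat).
Implicit Types (p q r g c x u : {mpoly K[n]}) (S : seq {mpoly K[n]}).

Lemma gen_idealP S p :
  gen_ideal S p <-> exists c : nat -> {mpoly K[n]}, p = \sum_(i < size S) c i * S`_i.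
Proof.
split=> [[c ->]|[c ->]]; last by exists (fun i => c i).
by exists (fun i => oapp c 0 (insub i)); apply: eq_bigr => i _; rewrite valK.
Qed.

Lemma gen_ideal0 S : gen_ideal S 0.
Proof. by apply/gen_idealP; exists (fun=> 0); rewrite big1 // => i _; rewrite mul0r. Qed.

Lemma gen_idealD S p q : gen_ideal S p -> gen_ideal S q -> gen_ideal S (p + q).
Proof.
move=> /gen_idealP[c ->] /gen_idealP[c' ->]; apply/gen_idealP.
by exists (fun i => c i + c' i); rewrite -big_split; apply: eq_bigr => i _; rewrite mulrDl.
Qed.

Lemma gen_idealMl S r p : gen_ideal S p -> gen_ideal S (r * p).
Proof.
move=> /gen_idealP[c ->]; apply/gen_idealP; exists (fun i => r * c i).
by rewrite mulr_sumr; apply: eq_bigr => i _; rewrite mulrA.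
Qed.

Lemma gen_idealN S p : gen_ideal S p -> gen_ideal S (- p).
Proof. by rewrite -mulN1r; apply: gen_idealMl. Qed.

Lemma gen_ideal_rcons S x p :
  gen_ideal (rcons S x) p <-> exists g c, gen_ideal S g /\ p = g + c * x.
Proof.
have last_x : (rcons S x)`_(size S) = x by rewrite nth_rcons ltnn eqxx.
split=> [/gen_idealP[c ->]|[g [c [/gen_idealP[c' ->] ->]]]].
  rewrite size_rcons big_ord_recr /= last_x.
  exists (\sum_(i < size S) c i * S`_i), (c (size S)).
  split; last by congr (_ + _); apply: eq_bigr => i _; rewrite nth_rcons ltn_ord.
  by apply/gen_idealP; exists c.
apply/gen_idealP; exists (fun i => if i == size S then c else c' i).
rewrite size_rcons big_ord_recr /= eqxx last_x; congr (_ + _).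
by apply: eq_bigr => i _; rewrite nth_rcons ltn_ord ltn_eqF.
Qed.

Lemma gen_ideal_rconsl S x p : gen_ideal S p -> gen_ideal (rcons S x) p.
Proof. by move=> Sp; apply/gen_ideal_rcons; exists p, 0; rewrite mul0r addr0. Qed.

Lemma gen_ideal_rconsr S x c : gen_ideal (rcons S x) (c * x).
Proof. by apply/gen_ideal_rcons; exists 0, c; rewrite add0r; split; first exact: gen_ideal0. Qed.

(* Each generator [S`_i] of degree [d_i <= e] is multiplied by the component
   of degree [e - d_i] of its coefficient in [u]. *)
Lemma gen_ideal_hcomp_lift S u e : gen_ideal (map (@hcomp K n) S) u ->
  exists v, [/\ gen_ideal S v, (msize v <= e.+1)%N & pihomog mdeg e v = pihomog mdeg e u].
Proof.
move=> /gen_idealP[c ->]; rewrite size_map.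
pose d i := (msize S`_i).-1.
pose c' i := if (d i <= e)%N then pihomog mdeg (e - d i) (c i) else 0.
exists (\sum_(i < size S) c' i * S`_i); split.
- by apply/gen_idealP; exists c'.
- apply: leq_trans (mmeasure_sum _ _ _ _) _; apply/bigmax_leqP => i _.
  rewrite /c'; case: (leqP (d i) e) => [le_de|_]; last by rewrite mul0r msize0.
  apply: leq_trans (leq_msizeM _ _) _.
  have le_S : (msize S`_i <= (d i).+1)%N by exact: leqSpred.
  have le_c : (msize (pihomog mdeg (e - d i) (c i)) <= (e - d i).+1)%N.
    exact/msize_dhomog_le/pihomogP.
  rewrite -subn1 leq_subLR add1n; apply: leq_trans (leq_add le_c le_S) _.
  by rewrite addSn addnS subnK.
rewrite !linear_sum; apply: eq_bigr => i _ /=.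
rewrite (nth_map 0) // [c i * _]mulrC (pihomogM_dhomog _ _ (hcomp_dhomog _)) -/(d i) /c'.
case: (leqP (d i) e) => le_de; last by rewrite mul0r pihomog0.
rewrite (pihomogM_dhomog _ _ (pihomogP _ _ _)) leq_subr subKn //.
exact: mulrC.
Qed.

End GeneratedIdeal.

Section RegularSequence.
Variables (K : fieldType) (n : nat).
Implicit Types (q f x : {mpoly K[n]}) (S fs : seq {mpoly K[n]}).

(* Strong induction on [msize c] for [f = g + c * x]: when the leading forms
   of [g] and [c * x] cancel, regularity puts [hcomp c] in the ideal of the
   leading forms of [S]; lifting it to [v] in the ideal of [S] rewrites [f]
   as [(g + v * x) + (c - v) * x] with a smaller coefficient of [x]. *)
Lemma hcomp_gen_ideal_rcons S x :
  (forall f, gen_ideal S f -> gen_ideal (map (@hcomp K n) S) (hcomp f)) ->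
  (forall q, gen_ideal (map (@hcomp K n) S) (q * hcomp x) ->
     gen_ideal (map (@hcomp K n) S) q) ->
  forall f, gen_ideal (rcons S x) f ->
    gen_ideal (map (@hcomp K n) (rcons S x)) (hcomp f).
Proof.
move=> hcompS regx f /gen_ideal_rcons[g [c [Sg ->]]]; rewrite map_rcons.
elim: (msize c).+1 {-2}c (ltnSn (msize c)) g Sg => // N IHN {}c lt_cN g Sg.
have [->|nz_g] := eqVneq g 0; first by rewrite add0r hcompM; apply: gen_ideal_rconsr.
case: (ltngtP (msize (c * x)) (msize g)) => [lt_cxg|lt_gcx|eq_gcx].
- by rewrite hcompDl //; apply/gen_ideal_rconsl/hcompS.
- by rewrite addrC hcompDl // hcompM; apply: gen_ideal_rconsr.
have [cancel|nz_sum] := eqVneq (hcomp g + hcomp (c * x)) 0; last first.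
  rewrite hcompD // hcompM; apply/gen_ideal_rcons.
  by exists (hcomp g), (hcomp c); split; first exact: hcompS.
have nz_c : c != 0.
  by apply: contra_neq nz_g => c0; apply/eqP; rewrite -msize_poly_eq0 -eq_gcx c0 mul0r msize0.
have hcomp_c : gen_ideal (map (@hcomp K n) S) (hcomp c).
  apply: regx; have -> : hcomp c * hcomp x = - hcomp g.
    by apply/eqP; rewrite -hcompM -addr_eq0 addrC cancel.
  exact/gen_idealN/hcompS.
have [v [Sv size_v top_v]] := gen_ideal_hcomp_lift (msize c).-1 hcomp_c.
have lt_cv : (msize (c - v) < msize c)%N.
  rewrite [X in (_ < X)%N](mpolySpred _ nz_c) ltnS.
  apply: msizeB_pihomog => //; first by rewrite -mpolySpred.
  by rewrite top_v pihomog_id.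
have -> : g + c * x = (g + v * x) + (c - v) * x.
  by rewrite mulrBl addrACA subrr addr0.
apply: IHN; first exact: leq_trans lt_cv _.
by rewrite mulrC; apply/gen_idealD/gen_idealMl.
Qed.

Lemma hcomp_gen_ideal_regular fs : regular_seq fs ->
  forall f, gen_ideal fs f -> gen_ideal (map (@hcomp K n) fs) (hcomp f).
Proof.
move=> reg.
suff take_ideal k : (k <= size fs)%N -> forall f, gen_ideal (take k fs) f ->
    gen_ideal (map (@hcomp K n) (take k fs)) (hcomp f).
  by move=> f; have := take_ideal _ (leqnn _) f; rewrite take_size.
elim: k => [_|k IHk lt_k] f.
  by rewrite take0 => /gen_idealP[c ->]; rewrite big_ord0 hcomp0; apply: gen_ideal0.
rewrite (take_nth 0 lt_k); apply: hcomp_gen_ideal_rcons; first exact/IHk/ltnW.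
exact: reg.
Qed.

End RegularSequence.

Section LinearSubstitution.
Variables (R : comNzRingType) (n k : nat).

Lemma comp_mpolyA l (p : {mpoly R[n]}) (lq : n.-tuple {mpoly R[k]})
    (lr : k.-tuple {mpoly R[l]}) :
  (p \mPo lq) \mPo lr = p \mPo [tuple tnth lq i \mPo lr | i < n].
Proof.
elim/mpolyind: p => [|c m p _ _ IH]; first by rewrite !comp_mpoly0.
rewrite !comp_mpolyD IH !comp_mpolyZ !comp_mpolyX rmorph_prod.
by congr (_ *: _ + _); apply: eq_bigr => i _; rewrite rmorphXn tnth_mktuple.
Qed.

Variable lq : n.-tuple {mpoly R[k]}.
Hypothesis lq_linear : forall i, tnth lq i \is 1.-homog.

Lemma comp_mpoly_dhomog d (p : {mpoly R[n]}) :
  p \is d.-homog -> p \mPo lq \is d.-homog.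
Proof.
move/dhomogP => hp; rewrite [p]mpolyE raddf_sum /= big_seq.
apply: rpred_sum => m p_m; have <- : mdeg m = d := hp m p_m.
rewrite comp_mpolyZ comp_mpolyX mdegE; apply: rpredZ.
elim/big_rec2: _ => [|i e q _ hq]; first exact: dhomog1.
by apply: dhomogM hq; rewrite -[X in X.-homog]mul1n; exact: dhomogMn.
Qed.

Lemma msize_comp_mpoly_le (p : {mpoly R[n]}) : (msize (p \mPo lq) <= msize p)%N.
Proof.
rewrite {1}(pihomog_partitionE (leqnn (msize p))) raddf_sum /=.
apply: leq_trans (mmeasure_sum _ _ _ _) _; apply/bigmax_leqP => i _.
exact/(leq_trans (msize_dhomog_le (comp_mpoly_dhomog (pihomogP _ i p))))/ltn_ord.
Qed.

End LinearSubstitution.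

Section LinearAction.
Variables (K : fieldType) (n : nat).
Implicit Types (p q : {mpoly K[n]}) (g h : 'M[K]_n).

Lemma act_linear g i : tnth [tuple \sum_(j < n) g i j *: 'X_j | i < n] i \is 1.-homog.
Proof.
rewrite tnth_mktuple; apply: rpred_sum => j _; apply: rpredZ.
by rewrite dhomogX; apply/eqP/mdeg1.
Qed.

Lemma act_dhomog g d p : p \is d.-homog -> act g p \is d.-homog.
Proof. exact/comp_mpoly_dhomog/act_linear. Qed.

Lemma msize_act g p : (msize (act g p) <= msize p)%N.
Proof. exact/msize_comp_mpoly_le/act_linear. Qed.

Lemma actM g h p : act h (act g p) = act (g *m h) p.
Proof.
rewrite /act comp_mpolyA; congr comp_mpoly; apply: eq_from_tnth => i.
rewrite !tnth_mktuple raddf_sum /=.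
under eq_bigr do rewrite comp_mpolyZ comp_mpolyXU -tnth_nth tnth_mktuple scaler_sumr.
rewrite exchange_big /=; apply: eq_bigr => l _; rewrite mxE scaler_suml.
by apply: eq_bigr => j _; rewrite scalerA.
Qed.

Lemma act1 p : act 1%:M p = p.
Proof.
rewrite /act -[RHS]comp_mpoly_id; congr comp_mpoly; apply: eq_from_tnth => i.
rewrite !tnth_mktuple (bigD1 i) //= big1 ?addr0 => [|j ne_ji].
  by rewrite mxE eqxx mulr1n scale1r.
by rewrite mxE eq_sym (negbTE ne_ji) mulr0n scale0r.
Qed.

Lemma act_eq0 g p : g \in unitmx -> (act g p == 0) = (p == 0).
Proof.
move=> unit_g; apply/idP/idP => [|/eqP->]; last by rewrite /act raddf0.
by move/eqP/(congr1 (act (invmx g))); rewrite actM mulmxV // act1 /act raddf0 => ->.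
Qed.

Lemma hcomp_act g p : g \in unitmx -> hcomp (act g p) = act g (hcomp p).
Proof.
move=> unit_g; have [->|nz_p] := eqVneq p 0; first by rewrite hcomp0 /act raddf0 hcomp0.
apply: (@hcomp_top _ _ (msize p).-1); first exact/act_dhomog/hcomp_dhomog.
  by rewrite act_eq0 // hcomp_eq0.
by rewrite -raddfB; apply: leq_trans (msize_act _ _) (msizeB_hcomp _).
Qed.

End LinearAction.

Section InitialIdeal.
Variables (K : fieldType) (n : nat).

Lemma in_drl_act_hcomp (S : seq {mpoly K[n]}) (g : 'M[K]_n) : g \in unitmx ->
  (forall f, gen_ideal S f -> gen_ideal (map (@hcomp K n) S) (hcomp f)) ->
  forall m, in_drl (act_set g (gen_ideal S)) m <->
            in_drl (act_set g (gen_ideal (map (@hcomp K n) S))) m.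
Proof.
move=> unit_g hcompS m; split=> [[_ [[q [Sq ->]] [nz_gq lead_m]]]|].
  exists (act g (hcomp q)); split; first by exists (hcomp q); split; first exact: hcompS.
  by rewrite act_eq0 // hcomp_eq0 -(act_eq0 _ unit_g) -hcomp_act // lead_drl_hcomp.
case=> _ [[q [Sq ->]] [nz_gq lead_m]].
have [v [Sv size_v top_v]] := gen_ideal_hcomp_lift (msize q).-1 Sq.
have nz_q : q != 0 by rewrite -(act_eq0 _ unit_g).
have hcomp_v : hcomp v = hcomp q.
  apply: hcomp_top; [exact: hcomp_dhomog | by rewrite hcomp_eq0 |].
  apply: msizeB_pihomog => //; first exact/msize_dhomog_le/hcomp_dhomog.
  by rewrite top_v pihomog_id.
have nz_v : v != 0 by rewrite -hcomp_eq0 hcomp_v hcomp_eq0.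
exists (act g v); split; first by exists v.
split; first by rewrite act_eq0.
by apply/lead_drl_hcomp; rewrite hcomp_act // hcomp_v -hcomp_act //; apply/lead_drl_hcomp.
Qed.

Lemma min_gens_ext (M M' : 'X_{1..n} -> Prop) :
  (forall m, M m <-> M' m) -> forall m, min_gens M m <-> min_gens M' m.
Proof.
move=> eqM m; split=> -[Mm min_m]; split=> [|m' /eqM]; by [apply/eqM | apply: min_m].
Qed.

End InitialIdeal.

Theorem proposition7p2 (K : fieldType)
    (K_infinite : forall s : seq K, exists x : K, x \notin s)
    (n : nat) (fs : seq {mpoly K[n]}) :
  regular_seq fs ->
  forall G : 'X_{1..n} -> Prop,
    is_Gin (gen_ideal (map (@hcomp K n) fs)) G ->
    exists Ua : 'M[K]_n -> Prop,
      zariski_open_GL Ua /\ (exists g, Ua g) /\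
      forall g, Ua g ->
        forall m, E_drl (act_set g (gen_ideal fs)) m <-> min_gens G m.
Proof.
move=> reg G [U [[ps U_open] [[g0 U_g0] U_Gin]]].
exists U; split; first by exists ps.
split=> [|g U_g]; first by exists g0.
have unit_g : g \in unitmx by case/U_open: U_g.
apply: min_gens_ext => m; apply: iff_trans (U_Gin g U_g m).
exact/in_drl_act_hcomp/hcomp_gen_ideal_regular.
Qed.
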